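(* Let $(H,\mu,\eta,\Delta,\varepsilon,s)$ be a Hopf algebra in a strict symmetric monoidal category $\mathcal{C}$ which admits a Hopf-Frobenius algebra structure. Then this structure is unique up to invertible scalar: if $(\delta_g,\varepsilon_g,\mu_r,\eta_r)$ and $(\delta_g',\varepsilon_g',\mu_r',\eta_r')$ are two choices of green comonoid and red monoid which, together with green monoid $(\mu,\eta)$, red comonoid $(\Delta,\varepsilon)$ and antipode $s$, form Hopf-Frobenius algebras, then each of $\delta_g',\varepsilon_g',\mu_r',\eta_r'$ is equal to the corresponding morphism $\delta_g,\varepsilon_g,\mu_r,\eta_r$ tensored with some invertible scalar $I\to I$.
   Context: $\mathcal{C}$ is a strict symmetric monoidal category with unit object $I$ and symmetry $\sigma$; scalars are morphisms $I\to I$. A Hopf algebra $(H,\mu,\eta,\Delta,\varepsilon,s)$: an object $H$ with an associative unital monoid $(\mu,\eta)$ and coassociative counital comonoid $(\Delta,\varepsilon)$ satisfying $\Delta\circ\mu=(\mu\otimes\mu)\circ(\mathrm{id}\otimes\sigma_{H,H}\otimes\mathrm{id})\circ(\Delta\otimes\Delta)$, $\Delta\circ\eta=\eta\otimes\eta$, $\varepsilon\circ\mu=\varepsilon\otimes\varepsilon$, $\varepsilon\circ\eta=\mathrm{id}_I$, and an antipode $s$ with $\mu\circ(s\otimes\mathrm{id})\circ\Delta=\eta\circ\varepsilon=\mu\circ(\mathrm{id}\otimes s)\circ\Delta$. A Frobenius algebra is a monoid $(m,u)$ and comonoid $(d,c)$ on the same object with $(\mathrm{id}\otimes m)\circ(d\otimes\mathrm{id})=d\circ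 m=(m\otimes\mathrm{id})\circ(\mathrm{id}\otimes d)$. A pre-Hopf-Frobenius algebra consists of an object $H$ with a green monoid $(\mu_g,\eta_g)$, green comonoid $(\delta_g,\varepsilon_g)$, red monoid $(\mu_r,\eta_r)$, red comonoid $(\delta_r,\varepsilon_r)$ and an endomorphism $s$ such that $(\mu_g,\eta_g,\delta_g,\varepsilon_g)$ and $(\mu_r,\eta_r,\delta_r,\varepsilon_r)$ are Frobenius algebras and $(\mu_g,\eta_g,\delta_r,\varepsilon_r,s)$ is a Hopf algebra. Write $e_g:=\varepsilon_g\circ\mu_g$, $d_g:=\delta_g\circ\eta_g$ (green cup and cap) and $e_r:=\varepsilon_r\circ\mu_r$, $d_r:=\delta_r\circ\eta_r$ (red cup and cap). A Hopf-Frobenius algebra is a pre-Hopf-Frobenius algebra such that $s=(\mathrm{id}_H\otimes e_r)\circ(d_g\otimes\mathrm{id}_H)$ and such that, with $s':=(e_g\otimes\mathrm{id}_H)\circ(\mathrm{id}_H\otimes d_r)$, the tuple $(\mu_r,\eta_r,\delta_g,\varepsilon_g,s')$ is a Hopf algebra. A Hopf algebra $(H,\mu,\eta,\Delta,\varepsilon,s)$ admits a Hopf-Frobenius algebra structure if there exist $\delta_g,\varepsilon_g,\mu_r,\eta_r$ such that the data with green monoid $(\mu,\eta)$, red comonoid $(\Delta,\varepsilon)$ and antipode $s$ is a Hopf-Frobenius algebra. *)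

Set Implicit Arguments.
Unset Strict Implicit.

Definition castH {O : Type} (Hom : O -> O -> Type) {A A' B B' : O}
  (e1 : A = A') (e2 : B = B') (f : Hom A B) : Hom A' B' :=
  match e1 in _ = X return Hom X B' with
  | eq_refl => match e2 in _ = Y return Hom A Y with eq_refl => f end
  end.
Arguments castH {O} Hom {A A' B B'} e1 e2 f.

(* Strictness: the associativity and unit
   laws hold as equalities of objects, and tensoring of morphisms is strictly
   associative and unital (up to the induced transports). *)
Record SMC := {
  Ob : Type;
  Hom : Ob -> Ob -> Type;
  idm : forall A, Hom A A;
  comp : forall A B C, Hom B C -> Hom A B -> Hom A C;
  tens : Ob -> Ob -> Ob;
  unitO : Ob;
  tensm : forall A B C D, Hom A B -> Hom C D -> Hom (tens A C) (tens B D);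
  sym : forall A B, Hom (tens A B) (tens B A);
  tens_assoc : forall A B C, tens (tens A B) C = tens A (tens B C);
  tens_unitl : forall A, tens unitO A = A;
  tens_unitr : forall A, tens A unitO = A;
  comp_assoc : forall A B C D (f : Hom A B) (g : Hom B C) (h : Hom C D),
      comp h (comp g f) = comp (comp h g) f;
  comp_idl : forall A B (f : Hom A B), comp (idm B) f = f;
  comp_idr : forall A B (f : Hom A B), comp f (idm A) = f;
  tensm_id : forall A B, tensm (idm A) (idm B) = idm (tens A B);
  tensm_comp : forall A B C A' B' C' (f : Hom A B) (g : Hom B C)
      (f' : Hom A' B') (g' : Hom B' C'),
      tensm (comp g f) (comp g' f') = comp (tensm g g') (tensm f f');
  tensm_assoc : forall A B C A' B' C' (f : Hom A A') (g : Hom B B') (h : Hom C C'),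
      castH Hom (tens_assoc A B C) (tens_assoc A' B' C') (tensm (tensm f g) h)
      = tensm f (tensm g h);
  tensm_unitl : forall A B (f : Hom A B),
      castH Hom (tens_unitl A) (tens_unitl B) (tensm (idm unitO) f) = f;
  tensm_unitr : forall A B (f : Hom A B),
      castH Hom (tens_unitr A) (tens_unitr B) (tensm f (idm unitO)) = f;
  sym_nat : forall A B C D (f : Hom A B) (g : Hom C D),
      comp (sym B D) (tensm f g) = comp (tensm g f) (sym A C);
  sym_inv : forall A B, comp (sym B A) (sym A B) = idm (tens A B);
  (* hexagon: sym_{A, B(x)C} = (id_B (x) sym_{A,C}) o (sym_{A,B} (x) id_C),
     with the (identity) associativity transports written out *)
  sym_hex : forall A B C,
      sym A (tens B C) =
      comp (castH Hom (tens_assoc B C A) eq_refl (idm (tens (tens B C) A)))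
      (comp (tensm (idm B) (sym A C))
      (comp (castH Hom eq_refl (tens_assoc B A C) (idm (tens (tens B A) C)))
      (comp (tensm (sym A B) (idm C))
            (castH Hom (tens_assoc A B C) eq_refl (idm (tens (tens A B) C))))))
}.

Arguments Hom : clear implicits.
Arguments idm {s} A.
Arguments comp {s A B C} _ _.
Arguments tens {s} _ _.
Arguments unitO {s}.
Arguments tensm {s A B C D} _ _.
Arguments sym {s} A B.
Arguments tens_assoc {s} A B C.
Arguments tens_unitl {s} A.
Arguments tens_unitr {s} A.

Section Hopf.
Variable C : SMC.
Notation Hm := (Hom C).
Local Infix "⊗" := tens (at level 40, left associativity).
Local Notation I := (@unitO C).
Local Infix "∘" := comp (at level 50, left associativity).
Local Notation id := (@idm C).

Definition assocR (A B D : Ob C) : Hm ((A ⊗ B) ⊗ D) (A ⊗ (B ⊗ D)) :=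
  castH Hm eq_refl (tens_assoc A B D) (id ((A ⊗ B) ⊗ D)).
Definition assocL (A B D : Ob C) : Hm (A ⊗ (B ⊗ D)) ((A ⊗ B) ⊗ D) :=
  castH Hm (tens_assoc A B D) eq_refl (id ((A ⊗ B) ⊗ D)).
Definition lunit (A : Ob C) : Hm (I ⊗ A) A :=
  castH Hm eq_refl (tens_unitl A) (id (I ⊗ A)).
Definition lunitinv (A : Ob C) : Hm A (I ⊗ A) :=
  castH Hm (tens_unitl A) eq_refl (id (I ⊗ A)).
Definition runit (A : Ob C) : Hm (A ⊗ I) A :=
  castH Hm eq_refl (tens_unitr A) (id (A ⊗ I)).
Definition runitinv (A : Ob C) : Hm A (A ⊗ I) :=
  castH Hm (tens_unitr A) eq_refl (id (A ⊗ I)).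

(* id (x) sigma (x) id on (X(x)X)(x)(X(x)X) *)
Definition mid_swap (X : Ob C) : Hm ((X ⊗ X) ⊗ (X ⊗ X)) ((X ⊗ X) ⊗ (X ⊗ X)) :=
  assocL X X (X ⊗ X) ∘ tensm (id X) (assocR X X X)
  ∘ tensm (id X) (tensm (sym X X) (id X))
  ∘ tensm (id X) (assocL X X X) ∘ assocR X X (X ⊗ X).

Variable H : Ob C.

Definition is_monoid (m : Hm (H ⊗ H) H) (u : Hm I H) : Prop :=
  (m ∘ tensm m (id H) = m ∘ tensm (id H) m ∘ assocR H H H /\
      m ∘ tensm u (id H) = lunit H /\
      m ∘ tensm (id H) u = runit H).

Definition is_comonoid (d : Hm H (H ⊗ H)) (c : Hm H I) : Prop :=
  (tensm d (id H) ∘ d = assocL H H H ∘ tensm (id H) d ∘ d /\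
      tensm c (id H) ∘ d = lunitinv H /\
      tensm (id H) c ∘ d = runitinv H).

Definition is_frobenius (m : Hm (H ⊗ H) H) (u : Hm I H)
  (d : Hm H (H ⊗ H)) (c : Hm H I) : Prop :=
  (is_monoid m u /\ is_comonoid d c /\
      tensm (id H) m ∘ assocR H H H ∘ tensm d (id H) = d ∘ m /\
      d ∘ m = tensm m (id H) ∘ assocL H H H ∘ tensm (id H) d).

Definition is_hopf (m : Hm (H ⊗ H) H) (u : Hm I H)
  (d : Hm H (H ⊗ H)) (c : Hm H I) (s : Hm H H) : Prop :=
  (is_monoid m u /\ is_comonoid d c /\
      (d ∘ m = tensm m m ∘ mid_swap H ∘ tensm d d /\
          d ∘ u = tensm u u ∘ lunitinv I /\
          c ∘ m = lunit I ∘ tensm c c /\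
          c ∘ u = id I) /\
      m ∘ tensm s (id H) ∘ d = u ∘ c /\ u ∘ c = m ∘ tensm (id H) s ∘ d).

Definition cup (m : Hm (H ⊗ H) H) (c : Hm H I) : Hm (H ⊗ H) I := c ∘ m.
Definition cap (u : Hm I H) (d : Hm H (H ⊗ H)) : Hm I (H ⊗ H) := d ∘ u.

Definition is_pre_hopf_frobenius
  (mg : Hm (H ⊗ H) H) (ug : Hm I H) (dg : Hm H (H ⊗ H)) (cg : Hm H I)
  (mr : Hm (H ⊗ H) H) (ur : Hm I H) (dr : Hm H (H ⊗ H)) (cr : Hm H I)
  (s : Hm H H) : Prop :=
  (is_frobenius mg ug dg cg /\ is_frobenius mr ur dr cr /\
      is_hopf mg ug dr cr s).

Definition is_hopf_frobenius
  (mg : Hm (H ⊗ H) H) (ug : Hm I H) (dg : Hm H (H ⊗ H)) (cg : Hm H I)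
  (mr : Hm (H ⊗ H) H) (ur : Hm I H) (dr : Hm H (H ⊗ H)) (cr : Hm H I)
  (s : Hm H H) : Prop :=
  let s' := lunit H ∘ tensm (cup mg cg) (id H) ∘ assocL H H H
            ∘ tensm (id H) (cap ur dr) ∘ runitinv H in
  (is_pre_hopf_frobenius mg ug dg cg mr ur dr cr s /\
      s = runit H ∘ tensm (id H) (cup mr cr) ∘ assocR H H H
          ∘ tensm (cap ug dg) (id H) ∘ lunitinv H /\
      is_hopf mr ur dg cg s').

End Hopf.

Definition invertible_scalar (C : SMC) (l : Hom C unitO unitO) : Prop :=
  exists l' : Hom C unitO unitO, comp l' l = idm unitO /\ comp l l' = idm unitO.

Definition scale (C : SMC) (A B : Ob C) (l : Hom C unitO unitO) (f : Hom C A B)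
  : Hom C A B := comp (lunit B) (comp (tensm l f) (lunitinv A)).

(* In a Hopf-Frobenius algebra the green counit [eg] is a left cointegral and the
   red unit [er] a right integral of the Hopf algebra, with [eg ∘ er = 1]. The red
   snake equation shows that every left cointegral φ equals (φ ∘ er) · eg, and the
   green one that every right integral Λ equals (eg ∘ Λ) · er; so a second
   structure has eg' = a · eg and er' = er · b with ab = ba = 1. The antipode
   formula forces green cap = (s ⊗ id) ∘ Δ ∘ er and red cup = eg ∘ μ ∘ (id ⊗ s),
   and the Frobenius laws recover dg from the green cap and mr from the red cup,
   whence dg' = b · dg and mr' = a · mr. *)

From Stdlib Require Import ProofIrrelevance.

Local Infix "∘" := comp (at level 50, left associativity).
Local Notation "f ⊗ g" := (tensm f g) (at level 40, left associativity).

Section Transport.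
Context {C : SMC}.

Definition transport {A B : Ob C} (e : A = B) : Hom C A B :=
  castH (Hom C) eq_refl e (idm A).

Lemma castH_transport {A A' B B' : Ob C} (e1 : A = A') (e2 : B = B') (f : Hom C A B) :
  castH (Hom C) e1 e2 f = transport e2 ∘ f ∘ transport (eq_sym e1).
Proof. destruct e1, e2; cbn. now rewrite comp_idl, comp_idr. Qed.

Lemma transport_irrelevance {A B : Ob C} (e e' : A = B) : transport e = transport e'.
Proof. now rewrite (proof_irrelevance _ e e'). Qed.

Lemma transport_loop {A : Ob C} (e : A = A) : transport e = idm A.
Proof. exact (transport_irrelevance e eq_refl). Qed.

Lemma comp_transport {A B D : Ob C} (e1 : A = B) (e2 : B = D) :
  transport e2 ∘ transport e1 = transport (eq_trans e1 e2).
Proof. destruct e1, e2; cbn. now rewrite comp_idl. Qed.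

Lemma tensm_transport {A B A' B' : Ob C} (e1 : A = B) (e2 : A' = B') :
  transport e1 ⊗ transport e2 = transport (f_equal2 tens e1 e2).
Proof. destruct e1, e2. rewrite !transport_loop. apply tensm_id. Qed.

Lemma tensm_id_transport {A A' B : Ob C} (e : A' = B) :
  idm A ⊗ transport e = transport (f_equal (tens A) e).
Proof. destruct e. rewrite !transport_loop. apply tensm_id. Qed.

Lemma tensm_transport_id {A A' B : Ob C} (e : A = B) :
  transport e ⊗ idm A' = transport (f_equal (fun X => tens X A') e).
Proof. destruct e. rewrite !transport_loop. apply tensm_id. Qed.

Lemma assocR_transport A B D : assocR A B D = transport (tens_assoc A B D).
Proof. reflexivity. Qed.

Lemma assocL_transport A B D : assocL A B D = transport (eq_sym (tens_assoc A B D)).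
Proof. unfold assocL. now rewrite castH_transport, !comp_idl. Qed.

Lemma lunit_transport A : lunit A = transport (tens_unitl A).
Proof. reflexivity. Qed.

Lemma lunitinv_transport A : lunitinv A = transport (eq_sym (tens_unitl A)).
Proof. unfold lunitinv. now rewrite castH_transport, !comp_idl. Qed.

Lemma runit_transport A : runit A = transport (tens_unitr A).
Proof. reflexivity. Qed.

Lemma runitinv_transport A : runitinv A = transport (eq_sym (tens_unitr A)).
Proof. unfold runitinv. now rewrite castH_transport, !comp_idl. Qed.

End Transport.

(* Strictness makes every structural morphism a transport along an equality of
   objects, and by proof irrelevance two transports with the same source and
   target coincide: this is the whole coherence theorem here. *)
Ltac coherence :=
  rewrite ?assocR_transport, ?assocL_transport, ?lunit_transport,
    ?lunitinv_transport, ?runit_transport, ?runitinv_transport;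
  rewrite ?tensm_transport, ?tensm_id_transport, ?tensm_transport_id, ?tensm_id,
    ?comp_idl, ?comp_idr;
  rewrite <- ?comp_assoc, ?comp_transport;
  first [ apply transport_irrelevance | apply transport_loop
        | symmetry; apply transport_loop ].

Section Structural.
Context {C : SMC}.
Local Notation I := (@unitO C).

Lemma lunitK {A : Ob C} : lunit A ∘ lunitinv A = idm A.
Proof. coherence. Qed.
Lemma lunitinvK {A : Ob C} : lunitinv A ∘ lunit A = idm (tens I A).
Proof. coherence. Qed.
Lemma runitK {A : Ob C} : runit A ∘ runitinv A = idm A.
Proof. coherence. Qed.
Lemma runitinvK {A : Ob C} : runitinv A ∘ runit A = idm (tens A I).
Proof. coherence. Qed.
Lemma runit_lunitinv_unit : runit I ∘ lunitinv I = idm I.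
Proof. coherence. Qed.
Lemma lunit_runitinv_unit : lunit I ∘ runitinv I = idm I.
Proof. coherence. Qed.
Lemma runitinv_unit : runitinv I = lunitinv I.
Proof. coherence. Qed.
Lemma pentagon_assocL {A B D E : Ob C} :
  (assocR A B D ⊗ idm E) ∘ assocL (tens A B) D E
  = assocL A (tens B D) E ∘ (idm A ⊗ assocL B D E) ∘ assocR A B (tens D E).
Proof. coherence. Qed.
Lemma pentagon_assocR {A B D E : Ob C} :
  (idm A ⊗ assocR B D E) ∘ assocR A (tens B D) E
  = assocR A B (tens D E) ∘ assocR (tens A B) D E ∘ (assocL A B D ⊗ idm E).
Proof. coherence. Qed.
Lemma triangle_assocL {A B : Ob C} :
  (runit A ⊗ idm B) ∘ assocL A I B = idm A ⊗ lunit B.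
Proof. coherence. Qed.
Lemma triangle_inv {A B : Ob C} :
  idm A ⊗ lunitinv B = assocR A I B ∘ (runitinv A ⊗ idm B).
Proof. coherence. Qed.
Lemma lunitinv_tens {A B : Ob C} : lunitinv A ⊗ idm B = assocL I A B ∘ lunitinv (tens A B).
Proof. coherence. Qed.
Lemma assocR_lunitinv {A B : Ob C} :
  assocR I A B ∘ (lunitinv A ⊗ idm B) = lunitinv (tens A B).
Proof. coherence. Qed.
Lemma lunit_assocR {A B : Ob C} : lunit (tens A B) ∘ assocR I A B = lunit A ⊗ idm B.
Proof. coherence. Qed.
Lemma lunit_assocL {A B : Ob C} : (lunit A ⊗ idm B) ∘ assocL I A B = lunit (tens A B).
Proof. coherence. Qed.
Lemma runit_assocR {A B : Ob C} : (idm A ⊗ runit B) ∘ assocR A B I = runit (tens A B).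
Proof. coherence. Qed.
Lemma assocL_runitinv {A B : Ob C} :
  assocL A B I ∘ (idm A ⊗ runitinv B) = runitinv (tens A B).
Proof. coherence. Qed.
Lemma lunit_unit_assocL {B : Ob C} :
  (lunit I ⊗ idm B) ∘ assocL I I B = idm I ⊗ lunit B.
Proof. coherence. Qed.
Lemma triangle_runitinv_unit {A : Ob C} :
  (runit A ⊗ idm I) ∘ assocL A I I ∘ (idm A ⊗ lunitinv I) ∘ runitinv A = runitinv A.
Proof. coherence. Qed.

Lemma comp_tensm {A B D A' B' D' : Ob C} (f : Hom C A B) (g : Hom C B D)
    (f' : Hom C A' B') (g' : Hom C B' D') :
  (g ⊗ g') ∘ (f ⊗ f') = (g ∘ f) ⊗ (g' ∘ f').
Proof. now rewrite tensm_comp. Qed.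

Lemma tensm_right_first {A B A' B' : Ob C} (f : Hom C A B) (g : Hom C A' B') :
  f ⊗ g = (f ⊗ idm B') ∘ (idm A ⊗ g).
Proof. now rewrite comp_tensm, comp_idl, comp_idr. Qed.

Lemma tensm_left_first {A B A' B' : Ob C} (f : Hom C A B) (g : Hom C A' B') :
  f ⊗ g = (idm B ⊗ g) ∘ (f ⊗ idm A').
Proof. now rewrite comp_tensm, comp_idl, comp_idr. Qed.

Lemma whisker_r_comp {A B D E : Ob C} (f : Hom C A B) (g : Hom C B D) :
  (g ∘ f) ⊗ idm E = (g ⊗ idm E) ∘ (f ⊗ idm E).
Proof. now rewrite comp_tensm, comp_idl. Qed.

Lemma whisker_l_comp {A B D E : Ob C} (f : Hom C A B) (g : Hom C B D) :
  idm E ⊗ (g ∘ f) = (idm E ⊗ g) ∘ (idm E ⊗ f).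
Proof. now rewrite comp_tensm, comp_idl. Qed.

Lemma assocR_nat {A B D A' B' D' : Ob C} (f : Hom C A A') (g : Hom C B B') (h : Hom C D D') :
  assocR A' B' D' ∘ (f ⊗ g ⊗ h) = f ⊗ (g ⊗ h) ∘ assocR A B D.
Proof.
  rewrite <- (tensm_assoc f g h), castH_transport, !assocR_transport, <- comp_assoc,
    comp_transport, transport_loop, comp_idr.
  reflexivity.
Qed.

Lemma assocL_nat {A B D A' B' D' : Ob C} (f : Hom C A A') (g : Hom C B B') (h : Hom C D D') :
  assocL A' B' D' ∘ (f ⊗ (g ⊗ h)) = f ⊗ g ⊗ h ∘ assocL A B D.
Proof.
  rewrite <- (tensm_assoc f g h), castH_transport, !assocL_transport, !comp_assoc,
    comp_transport, transport_loop, comp_idl.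
  reflexivity.
Qed.

Lemma lunit_nat {A B : Ob C} (f : Hom C A B) : lunit B ∘ (idm I ⊗ f) = f ∘ lunit A.
Proof.
  transitivity (castH (Hom C) (tens_unitl A) (tens_unitl B) (idm I ⊗ f) ∘ lunit A);
    [| now rewrite tensm_unitl].
  rewrite castH_transport, !lunit_transport, <- comp_assoc, comp_transport,
    transport_loop, comp_idr.
  reflexivity.
Qed.

Lemma lunitinv_nat {A B : Ob C} (f : Hom C A B) : (idm I ⊗ f) ∘ lunitinv A = lunitinv B ∘ f.
Proof.
  transitivity (lunitinv B ∘ castH (Hom C) (tens_unitl A) (tens_unitl B) (idm I ⊗ f));
    [| now rewrite tensm_unitl].
  rewrite castH_transport, !lunitinv_transport, !comp_assoc, comp_transport,
    transport_loop, comp_idl.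
  reflexivity.
Qed.

Lemma runit_nat {A B : Ob C} (f : Hom C A B) : runit B ∘ (f ⊗ idm I) = f ∘ runit A.
Proof.
  transitivity (castH (Hom C) (tens_unitr A) (tens_unitr B) (f ⊗ idm I) ∘ runit A);
    [| now rewrite tensm_unitr].
  rewrite castH_transport, !runit_transport, <- comp_assoc, comp_transport,
    transport_loop, comp_idr.
  reflexivity.
Qed.

Lemma runitinv_nat {A B : Ob C} (f : Hom C A B) : (f ⊗ idm I) ∘ runitinv A = runitinv B ∘ f.
Proof.
  transitivity (runitinv B ∘ castH (Hom C) (tens_unitr A) (tens_unitr B) (f ⊗ idm I));
    [| now rewrite tensm_unitr].
  rewrite castH_transport, !runitinv_transport, !comp_assoc, comp_transport,
    transport_loop, comp_idl.
  reflexivity.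
Qed.

Lemma unit_tensm {A B : Ob C} (f : Hom C A B) : idm I ⊗ f = lunitinv B ∘ f ∘ lunit A.
Proof. now rewrite <- comp_assoc, <- lunit_nat, comp_assoc, lunitinvK, comp_idl. Qed.

Lemma tensm_unit {A B : Ob C} (f : Hom C A B) : f ⊗ idm I = runitinv B ∘ f ∘ runit A.
Proof. now rewrite <- comp_assoc, <- runit_nat, comp_assoc, runitinvK, comp_idl. Qed.

Lemma comp_chain2 {A B D Z : Ob C} {a : Hom C B D} {b : Hom C A B} {r : Hom C A D}
  (E : a ∘ b = r) (X : Hom C D Z) : X ∘ a ∘ b = X ∘ r.
Proof. now rewrite <- comp_assoc, E. Qed.

Lemma comp_chain3 {A B D F Z : Ob C} {a : Hom C D F} {b : Hom C B D} {c : Hom C A B}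
  {r : Hom C A F} (E : a ∘ b ∘ c = r) (X : Hom C F Z) : X ∘ a ∘ b ∘ c = X ∘ r.
Proof. now rewrite <- E, !comp_assoc. Qed.

Lemma comp_chain4 {A B D F G Z : Ob C} {a : Hom C F G} {b : Hom C D F} {c : Hom C B D}
  {d : Hom C A B} {r : Hom C A G} (E : a ∘ b ∘ c ∘ d = r) (X : Hom C G Z) :
  X ∘ a ∘ b ∘ c ∘ d = X ∘ r.
Proof. now rewrite <- E, !comp_assoc. Qed.

End Structural.

(* [crewrite E] rewrites with [E : a ∘ .. ∘ d = r] (up to four factors, further
   arguments of [E] inferred) inside a left-associated composite [X ∘ a ∘ .. ∘ d],
   where [a ∘ .. ∘ d] is not a syntactic subterm; the result is re-associated. *)
Ltac crewrite_with E :=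
  first [ erewrite E | erewrite (comp_chain2 E) | erewrite (comp_chain3 E)
        | erewrite (comp_chain4 E)
        | let E' := open_constr:(E _) in crewrite_with E' ].
Ltac crewrite_in_with E h :=
  first [ erewrite E in h | erewrite (comp_chain2 E) in h | erewrite (comp_chain3 E) in h
        | erewrite (comp_chain4 E) in h
        | let E' := open_constr:(E _) in crewrite_in_with E' h ].
Tactic Notation "crewrite" open_constr(E) := crewrite_with E; rewrite ?comp_assoc.
Tactic Notation "crewrite" open_constr(E) "in" hyp(h) :=
  crewrite_in_with E h; rewrite ?comp_assoc in h.

Section HopfAlgebra.
Context {C : SMC} {H : Ob C} {m : Hom C (tens H H) H} {u : Hom C unitO H}
  {d : Hom C H (tens H H)} {c : Hom C H unitO} {s : Hom C H H}.
Hypothesis hopf : is_hopf m u d c s.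

Lemma antipode_unit : s ∘ u = u.
Proof.
  destruct hopf as [[_ [_ mul_unit_r]] [_ [[_ [comul_unit [_ counit_unit]]] [antipode_l _]]]].
  assert (E : m ∘ (s ⊗ idm H) ∘ d ∘ u = u).
  { now rewrite antipode_l, <- comp_assoc, counit_unit, comp_idr. }
  rewrite <- comp_assoc, comul_unit, !comp_assoc in E.
  crewrite comp_tensm in E.
  rewrite comp_idl, (tensm_left_first (s ∘ u) u), comp_assoc, mul_unit_r in E.
  crewrite runit_nat in E.
  now rewrite <- comp_assoc, runit_lunitinv_unit, comp_idr in E.
Qed.

Lemma counit_antipode : c ∘ s = c.
Proof.
  destruct hopf as [_ [[_ [_ comul_counit_r]] [[_ [_ [counit_mul counit_unit]]] [antipode_l _]]]].
  assert (E : c ∘ (m ∘ (s ⊗ idm H) ∘ d) = c).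
  { now rewrite antipode_l, comp_assoc, counit_unit, comp_idl. }
  rewrite !comp_assoc, counit_mul in E.
  crewrite comp_tensm in E.
  rewrite comp_idr, (tensm_right_first (c ∘ s) c), !comp_assoc in E.
  crewrite comul_counit_r in E. crewrite runitinv_nat in E.
  now rewrite lunit_runitinv_unit, comp_idl in E.
Qed.

End HopfAlgebra.

Section FrobeniusAlgebra.
Context {C : SMC} {H : Ob C} {m : Hom C (tens H H) H} {u : Hom C unitO H}
  {d : Hom C H (tens H H)} {c : Hom C H unitO}.
Hypothesis frob : is_frobenius m u d c.

Lemma frobenius_snake :
  lunit H ∘ (cup m c ⊗ idm H) ∘ assocL H H H ∘ (idm H ⊗ cap u d) = runit H.
Proof.
  destruct frob as [[_ [_ mul_unit_r]] [[_ [counit_l _]] [_ frob_r]]].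
  unfold cup, cap. rewrite whisker_r_comp, whisker_l_comp, !comp_assoc.
  crewrite (eq_sym frob_r). crewrite counit_l. crewrite mul_unit_r.
  now rewrite lunitK, comp_idl.
Qed.

Lemma frobenius_mul_cup_l :
  m = lunit H ∘ (cup m c ⊗ idm H) ∘ assocL H H H ∘ (idm H ⊗ d).
Proof.
  destruct frob as [_ [[_ [counit_l _]] [_ frob_r]]].
  unfold cup. rewrite whisker_r_comp, !comp_assoc.
  crewrite (eq_sym frob_r). crewrite counit_l. now rewrite lunitK, comp_idl.
Qed.

Lemma frobenius_mul_cup_r :
  m = runit H ∘ (idm H ⊗ cup m c) ∘ assocR H H H ∘ (d ⊗ idm H).
Proof.
  destruct frob as [_ [[_ [_ counit_r]] [frob_l _]]].
  unfold cup. rewrite whisker_l_comp, !comp_assoc.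
  crewrite frob_l. crewrite counit_r. now rewrite runitK, comp_idl.
Qed.

Lemma frobenius_comul_cap_l :
  d = (idm H ⊗ m) ∘ assocR H H H ∘ (cap u d ⊗ idm H) ∘ lunitinv H.
Proof.
  destruct frob as [[_ [mul_unit_l _]] [_ [frob_l _]]].
  unfold cap. rewrite whisker_r_comp, !comp_assoc.
  crewrite frob_l. crewrite mul_unit_l. crewrite lunitK.
  now rewrite comp_idr.
Qed.

Lemma frobenius_comul_cap_r :
  d = (m ⊗ idm H) ∘ assocL H H H ∘ (idm H ⊗ cap u d) ∘ runitinv H.
Proof.
  destruct frob as [[_ [_ mul_unit_r]] [_ [_ frob_r]]].
  unfold cap. rewrite whisker_l_comp, !comp_assoc.
  crewrite (eq_sym frob_r). crewrite mul_unit_r. crewrite runitK.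
  now rewrite comp_idr.
Qed.

End FrobeniusAlgebra.

Definition is_right_integral {C : SMC} {H : Ob C} (mu : Hom C (tens H H) H)
    (eps : Hom C H unitO) (l : Hom C unitO H) : Prop :=
  mu ∘ (l ⊗ idm H) = l ∘ eps ∘ lunit H.

Definition is_left_cointegral {C : SMC} {H : Ob C} (eta : Hom C unitO H)
    (Delta : Hom C H (tens H H)) (phi : Hom C H unitO) : Prop :=
  (idm H ⊗ phi) ∘ Delta = runitinv H ∘ eta ∘ phi.

Section Scalars.
Context {C : SMC}.
Local Notation I := (@unitO C).

Lemma scale_effect {A : Ob C} (l : Hom C I I) (f : Hom C A I) : scale l f = l ∘ f.
Proof.
  unfold scale. rewrite comp_assoc, (tensm_right_first l f), !comp_assoc.
  crewrite lunitinv_nat. rewrite tensm_unit, !comp_assoc.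
  crewrite lunit_runitinv_unit. crewrite runit_lunitinv_unit.
  now rewrite comp_idl, comp_idr.
Qed.

Lemma scale_state {B : Ob C} (l : Hom C I I) (f : Hom C I B) : scale l f = f ∘ l.
Proof.
  unfold scale. rewrite comp_assoc, (tensm_left_first l f), !comp_assoc.
  crewrite lunit_nat. rewrite tensm_unit, !comp_assoc.
  crewrite lunit_runitinv_unit. crewrite runit_lunitinv_unit.
  now rewrite !comp_idr.
Qed.

Lemma scale_plug_state {A B D : Ob C} (l : Hom C I I) (x : Hom C I A)
    (F : Hom C (tens A B) D) :
  scale l (F ∘ (x ⊗ idm B) ∘ lunitinv B) = F ∘ ((x ∘ l) ⊗ idm B) ∘ lunitinv B.
Proof.
  unfold scale. rewrite comp_assoc, (tensm_left_first l), unit_tensm, !comp_assoc.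
  rewrite lunitK, comp_idl. crewrite lunitinvK. rewrite comp_idr.
  crewrite comp_tensm. now rewrite comp_idl.
Qed.

Lemma scale_plug_effect {A B D : Ob C} (l : Hom C I I) (y : Hom C A I)
    (G : Hom C D (tens A B)) :
  scale l (lunit B ∘ (y ⊗ idm B) ∘ G) = lunit B ∘ ((l ∘ y) ⊗ idm B) ∘ G.
Proof.
  unfold scale. rewrite comp_assoc, (tensm_right_first l), unit_tensm, !comp_assoc.
  crewrite lunitinvK. crewrite lunitK. rewrite !comp_idr.
  crewrite comp_tensm. now rewrite comp_idl.
Qed.

End Scalars.

Section HopfFrobenius.
Context {C : SMC} {H : Ob C} {mu : Hom C (tens H H) H} {eta : Hom C unitO H}
  {Delta : Hom C H (tens H H)} {eps : Hom C H unitO} {s : Hom C H H}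
  {dg : Hom C H (tens H H)} {eg : Hom C H unitO}
  {mr : Hom C (tens H H) H} {er : Hom C unitO H}.
Local Notation I := (@unitO C).
Hypothesis hf : is_hopf_frobenius mu eta dg eg mr er Delta eps s.

Lemma hf_green_frobenius : is_frobenius mu eta dg eg.
Proof. exact (proj1 (proj1 hf)). Qed.

Lemma hf_red_frobenius : is_frobenius mr er Delta eps.
Proof. exact (proj1 (proj2 (proj1 hf))). Qed.

Lemma hf_hopf : is_hopf mu eta Delta eps s.
Proof. exact (proj2 (proj2 (proj1 hf))). Qed.

Lemma hf_antipode :
  s = runit H ∘ (idm H ⊗ cup mr eps) ∘ assocR H H H ∘ (cap eta dg ⊗ idm H) ∘ lunitinv H.
Proof. exact (proj1 (proj2 hf)). Qed.

Lemma green_counit_red_unit : eg ∘ er = idm I.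
Proof. destruct hf as [_ [_ [_ [_ [[_ [_ [_ counit_unit]]] _]]]]]. exact counit_unit. Qed.

(* Substitute the antipode formula; the red snake then straightens the red cup
   against the red cap. *)
Lemma green_cap_antipode : cap eta dg = (s ⊗ idm H) ∘ cap er Delta.
Proof.
  rewrite hf_antipode, !whisker_r_comp, lunitinv_tens, ?comp_assoc.
  crewrite (eq_sym (lunitinv_nat (cap er Delta))).
  crewrite (eq_sym (assocL_nat (cap eta dg) (idm H) (idm H))). rewrite tensm_id.
  crewrite (comp_tensm (idm I) (cap eta dg) (cap er Delta) (idm (tens H H))).
  rewrite comp_idl, comp_idr, (tensm_left_first (cap eta dg)), ?comp_assoc.
  crewrite pentagon_assocL.
  crewrite (eq_sym (assocL_nat (idm H) (cup mr eps) (idm H))).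
  crewrite triangle_assocL.
  rewrite <- (tensm_id H H).
  crewrite (assocR_nat (idm H) (idm H) (cap er Delta)).
  do 3 crewrite comp_tensm.
  rewrite !comp_idl, (frobenius_snake hf_red_frobenius).
  crewrite runit_assocR. crewrite runit_nat. crewrite runit_lunitinv_unit.
  now rewrite comp_idr.
Qed.

Lemma red_cup_antipode : cup mr eps = cup mu eg ∘ (idm H ⊗ s).
Proof.
  rewrite hf_antipode, !whisker_l_comp, triangle_inv, ?comp_assoc.
  crewrite (eq_sym (assocR_nat (idm H) (cap eta dg) (idm H))).
  crewrite pentagon_assocR.
  crewrite (eq_sym (assocR_nat (idm H) (idm H) (cup mr eps))).
  crewrite runit_assocR.
  crewrite (eq_sym (runit_nat (cup mu eg))). rewrite tensm_id.
  crewrite (comp_tensm (idm (tens H H)) (cup mu eg) (cup mr eps) (idm I)).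
  rewrite comp_idl, comp_idr, (tensm_left_first (cup mu eg)), unit_tensm, ?comp_assoc.
  rewrite runit_lunitinv_unit, comp_idl, <- (tensm_id H H).
  crewrite (eq_sym (assocR_nat (cup mu eg) (idm H) (idm H))).
  crewrite lunit_assocR.
  do 4 crewrite comp_tensm.
  now rewrite !comp_idl, (frobenius_snake hf_green_frobenius), runitK, tensm_id, comp_idr.
Qed.

Lemma red_cup_unit : cup mr eps ∘ (idm H ⊗ eta) = eg ∘ runit H.
Proof.
  destruct hf_green_frobenius as [[_ [_ mul_unit_r]] _].
  rewrite red_cup_antipode. crewrite comp_tensm.
  rewrite comp_idl, (antipode_unit hf_hopf). unfold cup. now crewrite mul_unit_r.
Qed.

Lemma counit_green_cap : (eps ⊗ idm H) ∘ cap eta dg = lunitinv H ∘ er.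
Proof.
  destruct hf_red_frobenius as [_ [[_ [counit_l _]] _]].
  rewrite green_cap_antipode, comp_assoc, comp_tensm, comp_idl, (counit_antipode hf_hopf).
  unfold cap. now rewrite comp_assoc, counit_l.
Qed.

(* Evaluate [mr (h ⊗ 1)] with both Frobenius forms of [mr]: one gives [eg(h) 1],
   the other [h₁ eg(h₂)]. *)
Lemma green_counit_left_cointegral : is_left_cointegral eta Delta eg.
Proof.
  destruct hf_hopf as [_ [_ [[_ [comul_unit _]] _]]].
  assert (via_l : mr ∘ (idm H ⊗ eta) ∘ runitinv H = eta ∘ eg).
  { rewrite (frobenius_mul_cup_l hf_red_frobenius), ?comp_assoc.
    crewrite comp_tensm. rewrite comp_idl, comul_unit, whisker_l_comp, ?comp_assoc.
    crewrite assocL_nat. crewrite comp_tensm.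
    rewrite comp_idl, red_cup_unit, (tensm_left_first (eg ∘ runit H)), ?comp_assoc.
    crewrite lunit_nat. rewrite whisker_r_comp, ?comp_assoc.
    crewrite triangle_runitinv_unit. crewrite runitinv_nat. crewrite lunit_runitinv_unit.
    now rewrite comp_idr. }
  assert (via_r : mr ∘ (idm H ⊗ eta) ∘ runitinv H = runit H ∘ (idm H ⊗ eg) ∘ Delta).
  { rewrite (frobenius_mul_cup_r hf_red_frobenius), ?comp_assoc.
    crewrite comp_tensm. rewrite comp_idl, comp_idr, (tensm_left_first Delta), ?comp_assoc.
    rewrite <- (tensm_id H H).
    crewrite (assocR_nat (idm H) (idm H) eta). crewrite comp_tensm.
    rewrite comp_idl, red_cup_unit, whisker_l_comp, ?comp_assoc.
    crewrite runit_assocR. crewrite runit_nat. crewrite runitK.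
    now rewrite comp_idr. }
  unfold is_left_cointegral.
  rewrite via_l in via_r.
  now rewrite <- comp_assoc, via_r, ?comp_assoc, runitinvK, comp_idl.
Qed.

(* Dually, evaluate [(ε ⊗ id) ∘ dg] with both Frobenius forms of [dg]. *)
Lemma red_unit_right_integral : is_right_integral mu eps er.
Proof.
  destruct hf_hopf as [_ [_ [[_ [_ [counit_mul _]]] _]]].
  assert (via_l : (eps ⊗ idm H) ∘ dg = lunitinv H ∘ mu ∘ (er ⊗ idm H) ∘ lunitinv H).
  { rewrite (frobenius_comul_cap_l hf_green_frobenius), ?comp_assoc.
    crewrite comp_tensm.
    rewrite comp_idl, comp_idr, (tensm_left_first eps mu), <- (tensm_id H H), ?comp_assoc.
    crewrite (eq_sym (assocR_nat eps (idm H) (idm H))).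
    crewrite (comp_tensm (cap eta dg)).
    rewrite counit_green_cap, comp_idl, whisker_r_comp, ?comp_assoc.
    crewrite assocR_lunitinv. now crewrite lunitinv_nat. }
  assert (via_r : (eps ⊗ idm H) ∘ dg = lunitinv H ∘ er ∘ eps).
  { rewrite (frobenius_comul_cap_r hf_green_frobenius), ?comp_assoc.
    crewrite comp_tensm. rewrite comp_idl, counit_mul, whisker_r_comp, ?comp_assoc.
    crewrite (eq_sym (assocL_nat eps eps (idm H))).
    crewrite lunit_unit_assocL.
    do 2 crewrite comp_tensm.
    rewrite comp_idl, comp_idr. crewrite counit_green_cap. rewrite lunitK, comp_idl.
    rewrite (tensm_left_first eps er), ?comp_assoc.
    crewrite runitinv_nat. rewrite runitinv_unit. now crewrite lunitinv_nat. }
  rewrite via_l in via_r.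
  apply (f_equal (fun k => lunit H ∘ k ∘ lunit H)) in via_r. cbv beta in via_r.
  rewrite ?comp_assoc, lunitK, !comp_idl in via_r.
  crewrite lunitinvK in via_r. rewrite comp_idr in via_r.
  exact via_r.
Qed.

(* The red snake, then the cointegral property of [phi] inside the red cap,
   then [red_cup_unit]. *)
Lemma left_cointegral_unique {phi : Hom C H I} :
  is_left_cointegral eta Delta phi -> phi = (phi ∘ er) ∘ eg.
Proof.
  intros cointegral.
  remember (phi ∘ er) as a eqn:Ea.
  assert (E : phi ∘ runit H ∘ runitinv H = phi) by (now rewrite <- comp_assoc, runitK, comp_idr).
  rewrite <- (frobenius_snake hf_red_frobenius), ?comp_assoc in E.
  crewrite (eq_sym (lunit_nat phi)) in E.
  crewrite comp_tensm in E.
  rewrite comp_idl, comp_idr, (tensm_right_first (cup mr eps) phi), <- (tensm_id H H),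
    ?comp_assoc in E.
  crewrite (eq_sym (assocL_nat (idm H) (idm H) phi)) in E.
  crewrite comp_tensm in E.
  unfold cap in E. rewrite comp_idl, comp_assoc, cointegral in E.
  crewrite (eq_sym Ea) in E.
  rewrite !whisker_l_comp, ?comp_assoc in E.
  crewrite assocL_runitinv in E. crewrite runitinv_nat in E.
  crewrite lunit_runitinv_unit in E. rewrite comp_idl in E.
  crewrite red_cup_unit in E. crewrite (eq_sym (runit_nat eg)) in E.
  crewrite comp_tensm in E.
  rewrite comp_idl, comp_idr, (tensm_left_first eg a), ?comp_assoc in E.
  crewrite runitinv_nat in E. rewrite unit_tensm, ?comp_assoc in E.
  crewrite runit_lunitinv_unit in E. crewrite lunit_runitinv_unit in E.
  rewrite comp_idl, comp_idr in E.
  now symmetry.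
Qed.

Lemma right_integral_unique {l : Hom C I H} :
  is_right_integral mu eps l -> l = er ∘ (eg ∘ l).
Proof.
  intros integral.
  remember (eg ∘ l) as b eqn:Eb.
  assert (E : runit H ∘ runitinv H ∘ l = l) by (now rewrite runitK, comp_idl).
  rewrite <- (frobenius_snake hf_green_frobenius), ?comp_assoc in E.
  crewrite (eq_sym (runitinv_nat l)) in E.
  crewrite comp_tensm in E.
  rewrite comp_idl, comp_idr, (tensm_right_first l (cap eta dg)), <- (tensm_id H H),
    ?comp_assoc in E.
  crewrite (assocL_nat l (idm H) (idm H)) in E.
  crewrite comp_tensm in E.
  unfold cup in E. rewrite comp_idl in E.
  crewrite integral in E. crewrite (eq_sym Eb) in E.
  rewrite !whisker_r_comp, ?comp_assoc in E.
  crewrite lunit_assocL in E. crewrite (lunit_nat (cap eta dg)) in E.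
  crewrite counit_green_cap in E. crewrite lunit_runitinv_unit in E.
  rewrite comp_idr in E.
  crewrite (eq_sym (lunitinv_nat er)) in E. crewrite comp_tensm in E.
  rewrite comp_idl, comp_idr, (tensm_left_first b er), ?comp_assoc in E.
  crewrite lunit_nat in E. rewrite tensm_unit, ?comp_assoc in E.
  crewrite lunit_runitinv_unit in E. crewrite runit_lunitinv_unit in E.
  rewrite !comp_idr in E.
  now symmetry.
Qed.

Lemma green_comul_red_unit :
  dg = (idm H ⊗ mu) ∘ assocR H H H ∘ (((s ⊗ idm H) ∘ Delta ∘ er) ⊗ idm H) ∘ lunitinv H.
Proof.
  rewrite (frobenius_comul_cap_l hf_green_frobenius), green_cap_antipode.
  unfold cap. now rewrite comp_assoc.
Qed.

Lemma red_mul_green_counit :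
  mr = lunit H ∘ ((eg ∘ mu ∘ (idm H ⊗ s)) ⊗ idm H) ∘ (assocL H H H ∘ (idm H ⊗ Delta)).
Proof.
  rewrite (frobenius_mul_cup_l hf_red_frobenius), red_cup_antipode.
  unfold cup. now rewrite comp_assoc.
Qed.

End HopfFrobenius.

Section TwoStructures.
Context {C : SMC} {H : Ob C} {mu : Hom C (tens H H) H} {eta : Hom C unitO H}
  {Delta : Hom C H (tens H H)} {eps : Hom C H unitO} {s : Hom C H H}
  {dg dg' : Hom C H (tens H H)} {eg eg' : Hom C H unitO}
  {mr mr' : Hom C (tens H H) H} {er er' : Hom C unitO H}.
Hypothesis hf : is_hopf_frobenius mu eta dg eg mr er Delta eps s.
Hypothesis hf' : is_hopf_frobenius mu eta dg' eg' mr' er' Delta eps s.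

Lemma green_comul_scale (b : Hom C unitO unitO) : er' = er ∘ b -> dg' = scale b dg.
Proof.
  intros Eb.
  rewrite (green_comul_red_unit hf'), (green_comul_red_unit hf), Eb, scale_plug_state.
  now rewrite ?comp_assoc.
Qed.

Lemma red_mul_scale (a : Hom C unitO unitO) : eg' = a ∘ eg -> mr' = scale a mr.
Proof.
  intros Ea.
  rewrite (red_mul_green_counit hf'), (red_mul_green_counit hf), Ea, scale_plug_effect.
  now rewrite ?comp_assoc.
Qed.

End TwoStructures.

Theorem mainTheorem5 (C : SMC) (H : Ob C)
  (mu : Hom C (tens H H) H) (eta : Hom C unitO H)
  (Delta : Hom C H (tens H H)) (eps : Hom C H unitO) (s : Hom C H H)
  (dg : Hom C H (tens H H)) (eg : Hom C H unitO)
  (mr : Hom C (tens H H) H) (er : Hom C unitO H)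
  (dg' : Hom C H (tens H H)) (eg' : Hom C H unitO)
  (mr' : Hom C (tens H H) H) (er' : Hom C unitO H) :
  is_hopf mu eta Delta eps s ->
  is_hopf_frobenius mu eta dg eg mr er Delta eps s ->
  is_hopf_frobenius mu eta dg' eg' mr' er' Delta eps s ->
  exists l1 l2 l3 l4 : Hom C unitO unitO,
    (invertible_scalar l1 /\ invertible_scalar l2 /\
        invertible_scalar l3 /\ invertible_scalar l4) /\
    (dg' = scale l1 dg /\ eg' = scale l2 eg /\
        mr' = scale l3 mr /\ er' = scale l4 er).
Proof.
  (* the Hopf axioms are also part of [is_hopf_frobenius] *)
  intros _ hf hf'.
  set (a := eg' ∘ er). set (b := eg ∘ er').
  assert (Ea : eg' = a ∘ eg)
    by exact (left_cointegral_unique hf (green_counit_left_cointegral hf')).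
  assert (Eb : eg = b ∘ eg')
    by exact (left_cointegral_unique hf' (green_counit_left_cointegral hf)).
  assert (Er : er' = er ∘ b)
    by exact (right_integral_unique hf (red_unit_right_integral hf')).
  assert (ba : b ∘ a = idm unitO).
  { unfold a. rewrite comp_assoc, <- Eb. exact (green_counit_red_unit hf). }
  assert (ab : a ∘ b = idm unitO).
  { unfold b. rewrite comp_assoc, <- Ea. exact (green_counit_red_unit hf'). }
  exists b, a, a, b. split.
  - repeat split; [exists a | exists b | exists b | exists a]; split; assumption.
  - repeat split.
    + exact (green_comul_scale hf hf' b Er).
    + rewrite scale_effect. exact Ea.
    + exact (red_mul_scale hf hf' a Ea).
    + rewrite scale_state. exact Er.
Qed.
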